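(* Let $N,d\in\mathbb{N}^*$, $\alpha>0$, $A\in\mathbb{R}_+^{N\times N}$, and $\psi:\mathbb{R}_+\to\mathbb{R}_+$ with $(r_1-r_2)(\psi(r_1)-\psi(r_2))\le0$ for all $r_1,r_2\ge0$ and $0<\psi(r)\le\psi(0)\le1$. Let $\pi$ be a probability measure on $\{1,\dots,N\}$ with $\pi_iA_{ij}=\pi_jA_{ji}$ for all $i\ne j$. Let $(x_i,v_i)_i$ be a solution on $\mathbb{R}_+$ of $$\frac{dx_i}{dt}=v_i,\qquad\frac{dv_i}{dt}=\alpha\sum_{j\ne i}A_{ij}\psi(\|x_j-x_i\|_2)(v_j-v_i)$$ which flocks, i.e. $\sup_{t\ge0}\sup_{i,j}\|x_i(t)-x_j(t)\|_2<+\infty$ and $\sup_{i,j}\|v_i(t)-v_j(t)\|_2\to0$ as $t\to+\infty$. Then $\|v_i(t)-v^*\|_2\to0$ as $t\to+\infty$ for all $i$, where $v^*=\sum_{i=1}^N\pi_iv_i(0)$.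
   Context: $\|\cdot\|_2$ is the Euclidean norm on $\mathbb{R}^d$. *)

From HB Require Import structures.
From mathcomp Require Import all_boot all_order all_algebra.
From mathcomp Require Import all_classical all_reals all_analysis.
Set Implicit Arguments. Unset Strict Implicit. Unset Printing Implicit Defensive.
Import Order.TTheory GRing.Theory Num.Theory.
Import numFieldNormedType.Exports.
Local Open Scope ring_scope.

Definition enorm (R : realType) (d : nat) (u : 'rV[R]_d) : R :=
  Num.sqrt (\sum_(k < d) u ord0 k ^+ 2).

From HB Require Import structures.
From mathcomp Require Import all_boot all_order all_algebra.
From mathcomp Require Import all_classical all_reals all_analysis.
Import Order.TTheory GRing.Theory Num.Theory.
Import numFieldNormedType.Exports.
Local Open Scope ring_scope.
Local Open Scope classical_set_scope.

(** Detailed balance [pi_i A_ij = pi_j A_ji] makes the [pi]-weighted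
    interaction antisymmetric, so the weighted mean velocity
    [m(t) = \sum_k pi_k v_k(t)] has zero derivative; being right-continuous
    at [0], it equals [v^* = m(0)] for all [t > 0].  As [v_i - m] is the convex
    combination [\sum_k pi_k (v_i - v_k)] of velocity differences,
    [|v_i(t) - v^*|] is at most [sqrt d] times the velocity diameter, which
    tends to [0] by flocking. *)

Lemma is_derive_mxE {R : realFieldType} {V : normedModType R} {m n}
    {f : V -> 'M[R]_(m, n)} {t v df} i j :
  is_derive t v f df -> is_derive t v (fun s => f s i j) (df i j).
Proof.
move=> [fd <-]; apply: DeriveDef; first exact: (derivable_mxP f t v).1 fd i j.
by rewrite derive_mx // mxE.
Qed.

Section zero_derivative_on_pos.
Context {R : realType}.

Lemma is_derive0_cst_pos (f : R -> R) :
  (forall t : R, 0 < t -> is_derive t 1 f 0) ->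
  forall s t : R, 0 < s -> 0 < t -> f s = f t.
Proof.
move=> Df; suff le_cst (s t : R) : 0 < s -> s <= t -> f s = f t.
  move=> s t s0 t0.
  by case: (leP s t) => [/(le_cst _ _ s0)|/ltW/(le_cst _ _ t0)/esym].
move=> s0 st.
have pos x : x \in `[s, t]%R -> 0 < x.
  by move=> xst; apply: (lt_le_trans s0); rewrite (itvP xst).
have Dst x : x \in `]s, t[%R -> is_derive x 1 f ((fun=> 0) x).
  by move=> xst; apply/Df/(lt_trans s0); rewrite (itvP xst).
have cont : {within `[s, t], continuous f}.
  by apply: derivable_within_continuous => x /pos/Df[].
have [_ _] := MVT_segment st Dst cont.
by rewrite mul0r => /eqP; rewrite subr_eq0 => /eqP.
Qed.

Lemma is_derive0_right_cont_cst m n (f : R -> 'M[R]_(m, n)) :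
  (forall t : R, 0 < t -> is_derive t 1 f 0) -> f t @[t --> 0^'+] --> f 0 ->
  forall t : R, 0 < t -> f t = f 0.
Proof.
move=> Df f0 t t0.
have f_cst (s : R) : 0 < s -> f s = f t.
  move=> s0; apply/matrixP => i j.
  apply: (@is_derive0_cst_pos (fun r => f r i j) _ s t s0 t0) => r r0.
  by have := is_derive_mxE i j (Df r r0); rewrite mxE.
have ft : f s @[s --> 0^'+] --> f t.
  by apply: cvg_near_cst; near=> s; apply: f_cst; near: s; exact: nbhs_right_gt.
exact: cvg_unique _ ft f0.
Unshelve. all: by end_near. Qed.

End zero_derivative_on_pos.

Section euclidean_norm.
Context {R : realType} {d : nat}.
Implicit Types u : 'rV[R]_d.

Lemma enormN u : enorm (- u) = enorm u.
Proof.
by rewrite /enorm; congr Num.sqrt; apply: eq_bigr => c _; rewrite mxE sqrrN.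
Qed.

Lemma coord_le_enorm u c : `|u ord0 c| <= enorm u.
Proof.
rewrite /enorm -sqrtr_sqr ler_sqrt; last by apply: sumr_ge0 => k _; apply: sqr_ge0.
by rewrite (bigD1 c) //= lerDl; apply: sumr_ge0 => k _; apply: sqr_ge0.
Qed.

Lemma enorm_le_sqrt_dim u (K : R) :
  (forall c, `|u ord0 c| <= K) -> enorm u <= Num.sqrt d%:R * K.
Proof.
case: d u => [|d'] u uK; first by rewrite /enorm big_ord0 sqrtr0 mul0r.
have K0 : 0 <= K by apply: le_trans (uK ord0).
have -> : Num.sqrt d'.+1%:R * K = Num.sqrt (\sum_(c < d'.+1) K ^+ 2).
  rewrite sumr_const card_ord -[in RHS]mulr_natr sqrtrM ?sqr_ge0 //.
  by rewrite sqrtr_sqr ger0_norm // mulrC.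
rewrite /enorm ler_sqrt; last by apply: sumr_ge0 => k _; apply: sqr_ge0.
apply: ler_sum => c _; rewrite -real_normK ?num_real //.
by rewrite lerXn2r ?nnegrE ?normr_ge0.
Qed.

Definition diam {N} (u : 'I_N -> 'rV[R]_d) : R :=
  \big[Num.max/0]_(i < N) \big[Num.max/0]_(j < N) enorm (u i - u j).

Lemma le_diam {N} (u : 'I_N -> 'rV[R]_d) i j : enorm (u i - u j) <= diam u.
Proof.
rewrite /diam; apply: le_trans (le_bigmax 0 _ i).
exact: (le_bigmax 0 (fun j => enorm (u i - u j))).
Qed.

Lemma enorm_sub_convex_le N (pi : 'I_N -> R) (u : 'I_N -> 'rV[R]_d) i :
  (forall k, 0 <= pi k) -> \sum_k pi k = 1 ->
  enorm (u i - \sum_k pi k *: u k) <= Num.sqrt d%:R * diam u.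
Proof.
move=> pi_ge0 pi_sum1.
have -> : u i - \sum_k pi k *: u k = \sum_k pi k *: (u i - u k).
  under [RHS]eq_bigr do rewrite scalerBr.
  by rewrite sumrB -scaler_suml pi_sum1 scale1r.
apply: enorm_le_sqrt_dim => c; rewrite summxE.
apply: le_trans (ler_norm_sum _ _ _) _.
rewrite -[diam u]mul1r -pi_sum1 mulr_suml; apply: ler_sum => k _.
rewrite mxE normrM ger0_norm //; apply: ler_wpM2l => //.
exact: le_trans (coord_le_enorm _ c) (le_diam _ _ _).
Qed.

End euclidean_norm.

Lemma sum_antisym_eq0 (R : numFieldType) (V : lmodType R) n
    (F : 'I_n -> 'I_n -> V) :
  (forall k j, F j k = - F k j) -> \sum_k \sum_j F k j = 0.
Proof.
move=> Fanti; set S := (X in X = 0).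
have SN : S = - S.
  rewrite {1}/S exchange_big -sumrN; apply: eq_bigr => j _.
  by rewrite -sumrN; apply: eq_bigr => k _; rewrite Fanti.
have S2 : 2%:R *: S = 0 by rewrite scaler_nat mulr2n {1}SN addNr.
by rewrite -[S]scale1r -(@mulVf _ 2%:R) ?pnatr_eq0 // -scalerA S2 scaler0.
Qed.

Lemma detailed_balance_sum_eq0 (R : numFieldType) (V : lmodType R) n
    (pi : 'I_n -> R) (W : 'I_n -> 'I_n -> R) (u : 'I_n -> V) :
  (forall k j, k != j -> pi k * W k j = pi j * W j k) ->
  \sum_k pi k *: \sum_(j | j != k) W k j *: (u j - u k) = 0.
Proof.
move=> balance.
pose F k j := (pi k * W k j) *: (u j - u k).
rewrite -[RHS](@sum_antisym_eq0 _ _ _ F).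
  apply: eq_bigr => k _.
  rewrite scaler_sumr [RHS](bigD1 k) //= /F subrr scaler0 add0r.
  by apply: eq_bigr => j _; rewrite scalerA.
move=> k j; rewrite /F; have [->|kj] := eqVneq k j.
  by rewrite subrr scaler0 oppr0.
by rewrite [in RHS]balance // -scalerN opprB.
Qed.

Definition mean_velocity {R : realType} {N d : nat} (pi : 'I_N -> R)
    (v : 'I_N -> R -> 'rV[R]_d) (t : R) : 'rV[R]_d :=
  \sum_k pi k *: v k t.

Section mean_velocity_conservation.
Context {R : realType} {N d : nat} {alpha : R} {A : 'M[R]_N} {psi : R -> R}.
Context { pi : 'I_N -> R} {x v : 'I_N -> R -> 'rV[R]_d}.
Hypothesis pi_balance : forall i j, i != j -> pi i * A i j = pi j * A j i.
Hypothesis Dv : forall i (t : R), 0 < t ->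
  is_derive t 1 (v i)
    (alpha *: \sum_(j < N | j != i)
       (A i j * psi (enorm (x j t - x i t))) *: (v j t - v i t)).

Lemma mean_velocity_is_derive0 (t : R) :
  0 < t -> is_derive t 1 (mean_velocity pi v) 0.
Proof.
move=> t0; have -> : mean_velocity pi v = \sum_k (pi k \*: v k).
  by rewrite fct_sumE.
apply: is_derive_eq; first by apply: is_derive_sum => k; apply/is_deriveZ/Dv.
under eq_bigr do rewrite scalerA mulrC -scalerA.
rewrite -scaler_sumr detailed_balance_sum_eq0 ?scaler0 // => k j kj.
by rewrite !mulrA pi_balance // -opprB enormN.
Qed.

Lemma mean_velocity_cst :
  (forall i, v i t @[t --> 0^'+] --> v i 0) ->
  forall t : R, 0 < t -> mean_velocity pi v t = mean_velocity pi v 0.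
Proof.
move=> cv; apply: is_derive0_right_cont_cst; first exact: mean_velocity_is_derive0.
apply: (@cvg_big _ _ +%R 0 xpredT add_continuous) => k _.
exact: cvgZ (cvg_cst _) (cv k).
Qed.

End mean_velocity_conservation.

Theorem proposition4p5 (R : realType) (N d : nat) (alpha : R)
  (A : 'M[R]_N) (psi : R -> R) (pi : 'I_N -> R)
  (x v : 'I_N -> R -> 'rV[R]_d) :
  (0 < N)%N -> (0 < d)%N -> 0 < alpha ->
  (forall i j, 0 <= A i j) ->
  (forall r1 r2, 0 <= r1 -> 0 <= r2 -> (r1 - r2) * (psi r1 - psi r2) <= 0) ->
  (forall r, 0 <= r -> 0 < psi r /\ psi r <= psi 0) ->
  psi 0 <= 1 ->
  (forall i, 0 <= pi i) -> \sum_(i < N) pi i = 1 ->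
  (forall i j, i != j -> pi i * A i j = pi j * A j i) ->
  (* (x, v) solves the system on R_+ : differentiable for t > 0, *)
  (forall i (t : R), 0 < t -> is_derive t 1 (x i) (v i t)) ->
  (forall i (t : R), 0 < t ->
     is_derive t 1 (v i)
       (alpha *: \sum_(j < N | j != i)
          (A i j * psi (enorm (x j t - x i t))) *: (v j t - v i t))) ->
  (* and continuous from the right at t = 0 *)
  (forall i, x i t @[t --> 0^'+] --> x i 0) ->
  (forall i, v i t @[t --> 0^'+] --> v i 0) ->
  (* flocking *)
  (exists M : R, forall t : R, 0 <= t -> forall i j, enorm (x i t - x j t) <= M) ->
  (\big[Num.max/0]_(i < N) \big[Num.max/0]_(j < N) enorm (v i t - v j t))
     @[t --> +oo] --> 0 ->
  forall i, enorm (v i t - \sum_(k < N) pi k *: v k 0) @[t --> +oo] --> 0.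
Proof.
move=> _ _ _ _ _ _ _ pi_ge0 pi_sum1 pi_balance _ Dv _ cv _ diam_v0 i.
have mean_cst := mean_velocity_cst pi_balance Dv cv.
apply: (@squeeze_cvgr _ _ _ _ (fun=> 0) (fun t => Num.sqrt d%:R * diam (v^~ t))).
- near=> t; apply/andP; split; first exact: sqrtr_ge0.
  have -> : \sum_k pi k *: v k 0 = mean_velocity pi v t.
    by rewrite mean_cst //; near: t; exact: nbhs_pinfty_gt.
  exact: enorm_sub_convex_le.
- exact: cvg_cst.
- by rewrite -(mulr0 (Num.sqrt d%:R)); apply: cvgMl_tmp.
Unshelve. all: by end_near.
Qed.
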